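(* Let $n$ training samples carry labels in $\{1,\dots,K\}$ with indicator matrix $F\in\mathbb{R}^{K\times n}$, $n_k$ samples in class $k$. Let the basis $G_1,\dots,G_r$ ($r\le n$) be a subset of the training samples, with $r_k\ge1$ basis vectors in class $k$, and let $F_{G_i}$ be the class indicator of $G_i$. Let $W\in\mathbb{R}^{r\times n}$ be entrywise nonnegative with positive column sums, $S=\operatorname{diag}(\mathbf{1}^TW)$, $\tilde W=WS^{-1}$ of full row rank, $X^*=F\tilde W^T(\tilde W\tilde W^T)^{-1}$, and assume $F\tilde W^T\neq0$. Define the fitting error $\epsilon=\|F-X^*\tilde W\|_F^2/\|X^*\tilde W\|_F^2+1$ and the spectral risk $\gamma=\|X^*\|_F^2\|\tilde W\|_F^2/\|X^*\tilde W\|_F^2$. If $W_{ij}=0$ whenever $F_{G_i}\neq F_j$ (ideal bipartite-graph condition), then $\epsilon=1$ and $$\frac{r}{n}\sum_{k=1}^K\frac{n_k}{r_k}\le\gamma\le r.$$ The upper bound is attained when every column of $\tilde W$ has exactly one nonzero entry; the lower bound is attained if and only if $r_k=1$ for all $k$.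
   Context: The columns of $F$ are standard basis vectors of $\mathbb{R}^K$: $F_j=e_k$ iff sample $j$ is in class $k$. $W_{ij}$ is the similarity between basis vector $G_i$ and training sample $j$; each column of $\tilde W$ sums to one. $X^*$ minimizes $\|F-X\tilde W\|_F^2$. *)

From mathcomp Require Import all_boot all_order all_algebra.
Set Implicit Arguments. Unset Strict Implicit. Unset Printing Implicit Defensive.
Import Order.TTheory GRing.Theory Num.Theory.
Local Open Scope ring_scope.

Definition indicator (R : ringType) (K n : nat) (lab : 'I_n -> 'I_K) : 'M[R]_(K, n) :=
  \matrix_(k < K, j < n) (if lab j == k then 1 else 0).

Definition frob2 (R : ringType) (m n : nat) (A : 'M[R]_(m, n)) : R :=
  \sum_(i < m) \sum_(j < n) A i j ^+ 2.

Definition colsum (R : ringType) (r n : nat) (W : 'M[R]_(r, n)) (j : 'I_n) : R :=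
  \sum_(i < r) W i j.

Definition Wnorm (R : fieldType) (r n : nat) (W : 'M[R]_(r, n)) : 'M[R]_(r, n) :=
  W *m invmx (diag_mx (\row_j colsum W j)).

Definition Xstar (R : fieldType) (K r n : nat) (F : 'M[R]_(K, n)) (Wt : 'M[R]_(r, n))
  : 'M[R]_(K, r) := F *m Wt^T *m invmx (Wt *m Wt^T).

Definition fit_error (R : fieldType) (K r n : nat) (F : 'M[R]_(K, n)) (Wt : 'M[R]_(r, n)) : R :=
  frob2 (F - Xstar F Wt *m Wt) / frob2 (Xstar F Wt *m Wt) + 1.

Definition spectral_risk (R : fieldType) (K r n : nat) (F : 'M[R]_(K, n)) (Wt : 'M[R]_(r, n)) : R :=
  frob2 (Xstar F Wt) * frob2 Wt / frob2 (Xstar F Wt *m Wt).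

(* n_k: number of training samples in class k;  r_k: number of basis vectors in class k
   (basis vector G_i is training sample g i). *)
Definition ncount (K n : nat) (lab : 'I_n -> 'I_K) (k : 'I_K) : nat := #|[pred j | lab j == k]|.
Definition rcount (K n r : nat) (lab : 'I_n -> 'I_K) (g : 'I_r -> 'I_n) (k : 'I_K) : nat :=
  #|[pred i | lab (g i) == k]|.

From mathcomp Require Import all_boot all_order all_algebra.
From mathcomp Require Import ring lra.
Import Order.TTheory GRing.Theory Num.Theory.
Local Open Scope ring_scope.

(* Under the ideal condition every column of W~ is a probability vector
   supported on the basis vectors of its own class, so F = E W~ where E is
   the class indicator of the basis.  Full row rank then gives X* = E, hence
   a perfect fit and gamma = (r/n) ||W~||_F^2.  A probability vector on a
   support of size r_k has squared norm 1/r_k + (its distance to the uniform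
   vector)^2 and at most 1, which yields both bounds; at the lower bound all
   columns of a class are uniform, which makes any two basis rows of the same
   class equal and forces r_k = 1 by full row rank. *)

Lemma frob2_col (R : nzRingType) (m n : nat) (A : 'M[R]_(m, n)) :
  frob2 A = \sum_(j < n) \sum_(i < m) A i j ^+ 2.
Proof. exact: exchange_big. Qed.

Lemma frob2_0 (R : nzRingType) (m n : nat) : frob2 (0 : 'M[R]_(m, n)) = 0.
Proof. by rewrite /frob2 big1 // => i _; rewrite big1 // => j _; rewrite mxE expr0n. Qed.

Lemma frob2_indicator (R : nzRingType) (K m : nat) (f : 'I_m -> 'I_K) :
  frob2 (indicator R f) = m%:R.
Proof.
rewrite frob2_col (eq_bigr (fun _ => 1)) ?sumr_const ?card_ord // => j _.
rewrite (bigD1 (f j)) //= mxE eqxx expr1n big1 ?addr0 // => k hk.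
by rewrite mxE eq_sym (negbTE hk) expr0n.
Qed.

Lemma sum_by_class {R : nmodType} {K n : nat} (lab : 'I_n -> 'I_K) (f : 'I_K -> R) :
  \sum_j f (lab j) = \sum_k f k *+ ncount lab k.
Proof.
rewrite (partition_big lab predT) //=; apply: eq_bigr => k _.
rewrite (eq_bigr (fun _ => f k)); last by move=> j /eqP ->.
by rewrite sumr_const.
Qed.

Lemma WnormE {R : fieldType} {r n : nat} {W : 'M[R]_(r, n)} :
  (forall j, colsum W j != 0) -> forall i j, Wnorm W i j = W i j / colsum W j.
Proof.
move=> colsum_neq0 i j; rewrite /Wnorm.
set D := diag_mx _; set D' := diag_mx (\row_j0 (colsum W j0)^-1).
have DD' : D *m D' = 1%:M.
  rewrite mulmx_diag -diag_const_mx; congr diag_mx.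
  by apply/matrixP => a b; rewrite !mxE mulfV.
have D_unit : D \in unitmx.
  by rewrite unitmxE det_diag unitfE; apply/prodf_neq0 => b _; rewrite mxE.
have -> : invmx D = D' by rewrite -[D']mul1mx -(mulVmx D_unit) -mulmxA DD' mulmx1.
by rewrite mul_mx_diag !mxE.
Qed.

Section Normalization.
Context {R : realFieldType} {r n : nat} {W : 'M[R]_(r, n)}.
Hypothesis W_ge0 : forall i j, 0 <= W i j.
Hypothesis colsum_gt0 : forall j, 0 < colsum W j.

Let WnormE' := WnormE (fun j => lt0r_neq0 (colsum_gt0 j)).

Lemma Wnorm_ge0 i j : 0 <= Wnorm W i j.
Proof. by rewrite WnormE' divr_ge0 // ltW. Qed.

Lemma Wnorm_col1 j : \sum_i Wnorm W i j = 1.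
Proof.
under eq_bigr do rewrite WnormE'.
by rewrite -mulr_suml -/(colsum W j) mulfV ?lt0r_neq0.
Qed.

Lemma Wnorm_eq0 i j : W i j = 0 -> Wnorm W i j = 0.
Proof. by rewrite WnormE' => ->; rewrite mul0r. Qed.

End Normalization.

Lemma rV_gram_eq0 (R : realDomainType) (n : nat) (u : 'rV[R]_n) :
  u *m u^T = 0 -> u = 0.
Proof.
move=> /(congr1 (fun M : 'M_1 => M 0 0)); rewrite !mxE => hs.
have {}hs : \sum_j u 0 j ^+ 2 = 0.
  by rewrite -[RHS]hs; apply: eq_bigr => k _; rewrite !mxE expr2.
apply/matrixP => a j; rewrite ord1 mxE; apply/eqP; rewrite -sqrf_eq0; apply/eqP.
exact: (psumr_eq0P (fun j _ => sqr_ge0 (u 0 j)) hs).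
Qed.

Lemma row_free_gram_unit {R : realFieldType} {r n : nat} {A : 'M[R]_(r, n)} :
  row_free A -> A *m A^T \in unitmx.
Proof.
move=> A_free; rewrite -row_free_unit; apply: inj_row_free => v hv.
apply/eqP; rewrite -(mulmx_free_eq0 _ A_free); apply/eqP/rV_gram_eq0.
by rewrite trmx_mul mulmxA -(mulmxA v) hv mul0mx.
Qed.

Lemma row_free_rows_inj {R : fieldType} {m n : nat} {A : 'M[R]_(m, n)} :
  row_free A -> forall i1 i2, row i1 A = row i2 A -> i1 = i2.
Proof.
move=> A_free i1 i2 eq_row; apply/eqP; apply: contraT => ne12.
have : (delta_mx 0 i1 - delta_mx 0 i2 : 'rV[R]_m) *m A == 0.
  by rewrite mulmxBl -!rowE eq_row subrr.
rewrite (mulmx_free_eq0 _ A_free) => /eqP/matrixP/(_ 0 i1).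
by rewrite !mxE !eqxx (negbTE ne12) subr0 => /eqP; rewrite oner_eq0.
Qed.

Lemma mx_neq0_ncols_gt0 {R : nzRingType} {m n : nat} {A : 'M[R]_(m, n)} :
  A != 0 -> (0 < n)%N.
Proof. by case: n A => // A; rewrite thinmx0 eqxx. Qed.

Section LeastSquares.
Context {R : fieldType} {K r n : nat} (E : 'M[R]_(K, r)) (Wt : 'M[R]_(r, n)).
Hypothesis gram_unit : Wt *m Wt^T \in unitmx.

Lemma Xstar_mul : Xstar (E *m Wt) Wt = E.
Proof. by rewrite /Xstar -!mulmxA (mulmxA Wt) mulmxV // mulmx1. Qed.

Lemma fit_error_mul : fit_error (E *m Wt) Wt = 1.
Proof. by rewrite /fit_error Xstar_mul subrr frob2_0 mul0r add0r. Qed.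

Lemma spectral_risk_mul :
  spectral_risk (E *m Wt) Wt = frob2 E * frob2 Wt / frob2 (E *m Wt).
Proof. by rewrite /spectral_risk Xstar_mul. Qed.

End LeastSquares.

Section Stochastic.
Context {R : realFieldType} {r n : nat} {P : 'M[R]_(r, n)}.
Hypothesis P_ge0 : forall i j, 0 <= P i j.
Hypothesis P_col1 : forall j, \sum_i P i j = 1.

Lemma stochastic_le1 i j : P i j <= 1.
Proof.
by rewrite -(P_col1 j) (bigD1 i) //= lerDl; apply: sumr_ge0 => i' _.
Qed.

Lemma frob2_stochastic_le : frob2 P <= n%:R.
Proof.
rewrite frob2_col -[n in n%:R]card_ord -sumr_const; apply: ler_sum => j _.
rewrite -(P_col1 j); apply: ler_sum => i _.
by have := P_ge0 i j; have := stochastic_le1 i j; nra.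
Qed.

Lemma frob2_stochastic_single :
  (forall j, #|[pred i | P i j != 0]| = 1%N) -> frob2 P = n%:R.
Proof.
move=> single; rewrite frob2_col -[n in n%:R]card_ord -sumr_const.
apply: eq_bigr => j _; have /card1P [i0 supp] := introT eqP (single j).
have P0 i : i != i0 -> P i j = 0.
  by move=> ne; have := supp i; rewrite !inE (negbTE ne) => /negbFE /eqP.
have P1 : P i0 j = 1 by rewrite -(P_col1 j) (bigD1 i0) //= big1 ?addr0.
by rewrite (bigD1 i0) //= big1 ?addr0 ?P1 ?expr1n // => i /P0 ->; rewrite expr0n.
Qed.

End Stochastic.

Lemma sqr_norm_prob_decomp {R : fieldType} {r : nat} (x : 'I_r -> R) (A : pred 'I_r) :
  (forall i, ~~ A i -> x i = 0) -> \sum_i x i = 1 -> (#|A|%:R : R) != 0 ->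
  \sum_i x i ^+ 2 = (#|A|%:R)^-1 + \sum_(i in A) (x i - (#|A|%:R)^-1) ^+ 2.
Proof.
move=> x0 x1 A_nz; set a := (#|A|%:R)^-1.
have sum_on_A (f : 'I_r -> R) : (forall i, ~~ A i -> f i = 0) -> \sum_(i in A) f i = \sum_i f i.
  by move=> f0; rewrite [RHS](bigID A) /= [X in _ + X]big1 ?addr0.
have sum1 : \sum_(i in A) x i = 1 by rewrite sum_on_A.
have sum2 : \sum_(i in A) x i ^+ 2 = \sum_i x i ^+ 2.
  by rewrite sum_on_A // => i /x0 ->; rewrite expr0n.
rewrite [X in _ = _ + X](eq_bigr (fun i => x i ^+ 2 - (a * 2) * x i + a ^+ 2)); last by move=> i _; ring.
by rewrite big_split /= sumrB -mulr_sumr sum1 sum2 sumr_const -mulr_natr /a; field.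
Qed.

Section IdealGraph.
Context {R : realFieldType} {K n r : nat} {lab : 'I_n -> 'I_K} {g : 'I_r -> 'I_n}.
Context {P : 'M[R]_(r, n)}.
Hypothesis P_ge0 : forall i j, 0 <= P i j.
Hypothesis P_col1 : forall j, \sum_i P i j = 1.
Hypothesis P_ideal : forall i j, lab (g i) != lab j -> P i j = 0.
Hypothesis rcount_gt0 : forall k, (0 < rcount lab g k)%N.

Local Notation rk j := ((rcount lab g (lab j))%:R : R).
Local Notation S := (\sum_(k < K) ((ncount lab k)%:R / (rcount lab g k)%:R) : R).

Lemma indicator_mul_ideal : indicator R (lab \o g) *m P = indicator R lab.
Proof.
apply/matrixP => k j; rewrite !mxE -(P_col1 j); have [<-|ne] := eqVneq (lab j) k.
  apply: eq_bigr => i _; rewrite mxE /=.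
  by case: eqP => [_|/eqP ne]; rewrite ?mul1r // mul0r P_ideal.
rewrite big1 // => i _; rewrite mxE /=; case: eqP => [eq_ik|_]; last by rewrite mul0r.
by rewrite P_ideal ?mulr0 // eq_ik eq_sym.
Qed.

Definition class_dev (j : 'I_n) : R :=
  \sum_(i | lab (g i) == lab j) (P i j - (rk j)^-1) ^+ 2.

Lemma class_dev_ge0 j : 0 <= class_dev j.
Proof. by apply: sumr_ge0 => i _; apply: sqr_ge0. Qed.

Lemma frob2_ideal : frob2 P = S + \sum_j class_dev j.
Proof.
rewrite frob2_col (eq_bigr (fun j => (rk j)^-1 + class_dev j)) => [|j _]; last first.
  apply: (sqr_norm_prob_decomp (fun i => P i j) [pred i | lab (g i) == lab j]) => //.
  - by move=> i /= /P_ideal.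
  - by rewrite pnatr_eq0 -lt0n; apply: rcount_gt0.
rewrite big_split /= (sum_by_class lab (fun k => ((rcount lab g k)%:R)^-1)).
by congr (_ + _); apply: eq_bigr => k _; rewrite mulr_natl.
Qed.

Lemma frob2_ideal_ge : S <= frob2 P.
Proof. by rewrite frob2_ideal lerDl; apply: sumr_ge0 => j _; apply: class_dev_ge0. Qed.

(* At the minimum every column is uniform on its class. *)
Lemma frob2_ideal_min_rows :
  frob2 P = S -> forall i1 i2, lab (g i1) = lab (g i2) -> row i1 P = row i2 P.
Proof.
move=> frob_min; have dev0 : \sum_j class_dev j = 0 by move: frob_min; rewrite frob2_ideal; lra.
have uniform i j : lab (g i) == lab j -> P i j = (rk j)^-1.
  move=> same; have dev_j0 := psumr_eq0P (fun j _ => class_dev_ge0 j) dev0 (i := j) isT.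
  have /eqP := psumr_eq0P (fun i _ => sqr_ge0 _) dev_j0 (i := i) same.
  by rewrite sqrf_eq0 subr_eq0 => /eqP.
move=> i1 i2 same; apply/rowP => j; rewrite !mxE.
have [eq_j|ne_j] := boolP (lab (g i1) == lab j).
  by rewrite (uniform i1) // (uniform i2) // -same.
by rewrite !P_ideal // -same.
Qed.

Lemma frob2_ideal_min_rcount1 :
  row_free P -> frob2 P = S -> forall k, rcount lab g k = 1%N.
Proof.
move=> P_free frob_min k; apply/eqP; rewrite eqn_leq rcount_gt0 andbT leqNgt.
apply/card_gt1P => -[i1 [i2 [/eqP same1 /eqP same2 ne12]]].
have /(row_free_rows_inj P_free) eq12 : row i1 P = row i2 P.
  by apply: frob2_ideal_min_rows => //; rewrite same1 same2.
by rewrite eq12 eqxx in ne12.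
Qed.

Lemma rcount1_frob2_ideal : (forall k, rcount lab g k = 1%N) -> frob2 P = S.
Proof.
move=> r1; have S_n : S = n%:R.
  rewrite -[n in n%:R]card_ord -sumr_const (sum_by_class lab (fun _ => (1 : R))).
  by apply: eq_bigr => k _; rewrite r1 divr1.
apply/le_anti; rewrite frob2_ideal_ge andbT S_n.
exact: frob2_stochastic_le.
Qed.

End IdealGraph.

Theorem theorem4 (R : realFieldType) (K n r : nat)
  (lab : 'I_n -> 'I_K) (g : 'I_r -> 'I_n) (W : 'M[R]_(r, n)) :
  injective g ->
  (forall k : 'I_K, (1 <= rcount lab g k)%N) ->
  (forall i j, 0 <= W i j) ->
  (forall j, 0 < colsum W j) ->
  \rank (Wnorm W) = r ->
  indicator R lab *m (Wnorm W)^T != 0 ->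
  (forall i j, lab (g i) != lab j -> W i j = 0) ->
  [/\ fit_error (indicator R lab) (Wnorm W) = 1,
      r%:R / n%:R * \sum_(k < K) ((ncount lab k)%:R / (rcount lab g k)%:R)
        <= spectral_risk (indicator R lab) (Wnorm W),
      spectral_risk (indicator R lab) (Wnorm W) <= r%:R,
      (forall j, #|[pred i | Wnorm W i j != 0]| = 1%N) ->
        spectral_risk (indicator R lab) (Wnorm W) = r%:R
    & spectral_risk (indicator R lab) (Wnorm W)
        = r%:R / n%:R * \sum_(k < K) ((ncount lab k)%:R / (rcount lab g k)%:R)
      <-> (forall k, rcount lab g k = 1%N)].
Proof.
move=> _ rcount_gt0 W_ge0 colsum_gt0 rank_Wt F_Wt_neq0 W_ideal.
set Wt := Wnorm W; set S := \sum_(k < K) _.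
have Wt_ge0 := Wnorm_ge0 W_ge0 colsum_gt0.
have Wt_col1 := Wnorm_col1 colsum_gt0.
have Wt_ideal i j (ne : lab (g i) != lab j) : Wt i j = 0 by rewrite Wnorm_eq0 ?W_ideal.
have Wt_free : row_free Wt by rewrite /row_free rank_Wt.
have F_eq := indicator_mul_ideal Wt_col1 Wt_ideal.
have r_gt0 := mx_neq0_ncols_gt0 F_Wt_neq0.
have n_gt0 : (0 < n)%N by rewrite (leq_trans r_gt0) // -{1}rank_Wt rank_leq_col.
have n_neq0 : (n%:R : R) != 0 by rewrite pnatr_eq0 -lt0n.
have rn_gt0 : 0 < (r%:R : R) / n%:R by rewrite divr_gt0 ?ltr0n.
have risk : spectral_risk (indicator R lab) Wt = r%:R / n%:R * frob2 Wt.
  rewrite -F_eq spectral_risk_mul ?row_free_gram_unit //.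
  by rewrite F_eq !frob2_indicator mulrAC.
split.
- by rewrite -F_eq fit_error_mul ?row_free_gram_unit.
- by rewrite risk ler_pM2l // frob2_ideal_ge.
- by rewrite risk -[leRHS](divfK n_neq0) ler_pM2l // frob2_stochastic_le.
- by move/(frob2_stochastic_single Wt_col1); rewrite risk => ->; rewrite divfK.
split => [|r1].
- rewrite risk => /(mulfI (lt0r_neq0 rn_gt0)).
  exact: frob2_ideal_min_rcount1 Wt_col1 Wt_ideal rcount_gt0 Wt_free.
- by rewrite risk (rcount1_frob2_ideal Wt_ge0 Wt_col1 Wt_ideal rcount_gt0 r1).
Qed.
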